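(* Consider a sequence $(x^k,y^k)$ generated by Algorithm IP (described in the context). For every $k\geq0$: (1) $q(x^{k+1})\leq q_{\mu_k}(x^{k+1})\leq q_{\mu_k}(x^k)$, and, for $k\geq1$, $q_{\mu_k}(x^k)\leq q_{\mu_{k-1}}(x^k)$; (2) $x^{k+1}$ is $\varepsilon_k$-stationary for $q_{\mu_k}$, i.e. $\operatorname{dist}(0,\hat\partial q_{\mu_k}(x^{k+1}))\leq\varepsilon_k$, and in particular $x^{k+1}$ is strictly feasible: $x^{k+1}\in\operatorname{dom} q$ and $c(x^{k+1})<0$; (3) $y^{k+1}\geq0$; (4) $\operatorname{dist}\bigl(-\nabla c(x^{k+1})^\top y^{k+1},\,\partial q(x^{k+1})\bigr)\leq\varepsilon_k$.
   Context: Setting: $f:\mathbb{R}^n\to\mathbb{R}$ has locally Lipschitz continuous gradient; $g:\mathbb{R}^n\to\mathbb{R}\cup\{\infty\}$ is proper, lower semicontinuous, prox-bounded ($g+\frac{1}{2\gamma}\|\cdot\|^2$ bounded below for some $\gamma>0$; $\gamma_g\in(0,\infty]$ denotes the supremum of such $\gamma$), and continuous relative to $\operatorname{dom} g$ (whenever $\operatorname{dom} g\ni x^k\to x$, $g(x^k)\to g(x)$); $c:\mathbb{R}^n\to\mathbb{R}^m$ has locally Lipschitz continuous Jacobian $\nabla c$. $q=f+g$, $\inf\{q(x): c(x)\le0\}\in\mathbb{R}$, $D=\{x: c(x)<0\}$, $F=\operatorname{dom} q\cap D\neq\emptyset$. The barrier $b:\mathbb{R}\to[0,\infty]$ has $\operatorname{dom}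 b=(-\infty,0)$, is twice continuously differentiable with $b'>0$ there, and $b(t)\to\infty$ as $t\to0^-$. For $\mu>0$: $f_\mu(z)=f(z)+\mu\sum_{i=1}^m b(c_i(z))$ ($=\infty$ outside $D$), $q_\mu=f_\mu+g$. $\hat\partial$ is the regular and $\partial$ the limiting subdifferential. $T_{\mu,\gamma}(z)=\operatorname{prox}_{\gamma g}(z-\gamma\nabla f_\mu(z))$ with $\operatorname{prox}_{\gamma g}(x)=\operatorname{argmin}_w\{g(w)+\frac{1}{2\gamma}\|w-x\|^2\}$. Inner solver IP-FB$(z^0,\mu,\varepsilon)$ (inputs $z^0\in F$, $\mu,\varepsilon>0$; parameters $\gamma_0\in(0,\gamma_g)$, $\alpha,\beta\in(0,1)$): set $j=0$ and start at step 2. Step 1 ($j\geq1$): $\gamma_j\gets\gamma_{j-1}$, $z^j\gets\bar z^{j-1}$. Step 2: compute $\bar z^j\in T_{\mu,\gamma_j}(z^j)$. Step 3: unless (a) $c(\bar z^j)<0$, (b) $q_\mu(\bar z^j)\leq q_\mu(z^j)-\frac{1-\alpha}{2\gamma_j}\|\bar z^j-z^j\|^2$ and (c) $\|\nabla f_\mu(\bar z^j)-\nabla f_\mu(z^j)\|\leq\frac{\alpha}{\gamma_j}\|\bar z^j-z^j\|$ all hold, set $\gamma_j\gets\beta\gamma_j$ and go back to Step 2. Step 4: if $\|\frac{1}{\gamma_j}(z^j-\bar z^j)-\nabla f_\mu(z^j)+\nabla f_\mu(\bar z^j)\|\leq\varepsilon$, return $\bar z^j$. Step 5: $j\gets j+1$,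 go to Step 1. Algorithm IP: inputs $x^0\in F$, tolerances $\epsilon_{\rm p},\epsilon_{\rm d}>0$; parameters $\varepsilon_0,\mu_0>0$, $\theta_\varepsilon,\theta_\mu\in(0,1)$. For $k=0,1,2,\dots$: (i) $x^{k+1}=$ IP-FB$(x^k,\mu_k,\varepsilon_k)$; (ii) $y_i^{k+1}=\mu_k b'(c_i(x^{k+1}))$ for all $i$; (iii) if $\varepsilon_k\leq\epsilon_{\rm d}$ and $\max_i\min\{-c_i(x^{k+1}),y_i^{k+1}\}\leq\epsilon_{\rm p}$, return $(x^{k+1},y^{k+1})$; (iv) choose $0<\varepsilon_{k+1}\leq\max\{\epsilon_{\rm d},\theta_\varepsilon\varepsilon_k\}$ and $0<\mu_{k+1}\leq\theta_\mu\mu_k$. *)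

(* Vectors of R^n are column vectors 'cV[R]_n; extended-valued functions
   take values in \bar R (R ∪ {±oo}; -oo is excluded by hypothesis). *)
From HB Require Import structures.
From mathcomp Require Import all_boot all_order all_algebra.
From mathcomp Require Import all_classical all_reals all_analysis.
Set Implicit Arguments. Unset Strict Implicit. Unset Printing Implicit Defensive.
Import Order.TTheory GRing.Theory Num.Theory.
Import numFieldNormedType.Exports.
Local Open Scope ring_scope.
Local Open Scope classical_set_scope.

Section IP.
Variable R : realType.

Definition dotv n (u v : 'cV[R]_n) : R := \sum_(i < n) u i ord0 * v i ord0.
Definition enorm n (u : 'cV[R]_n) : R := Num.sqrt (dotv u u).
Definition fnorm m n (A : 'M[R]_(m, n)) : R :=
  Num.sqrt (\sum_(i < m) \sum_(j < n) A i j ^+ 2).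

Definition vcvg n (u : nat -> 'cV[R]_n) (x : 'cV[R]_n) : Prop :=
  forall e : R, 0 < e -> exists N, forall k, (N <= k)%N -> enorm (u k - x) < e.

Definition rcvg (u : nat -> R) (a : R) : Prop :=
  forall e : R, 0 < e -> exists N, forall k, (N <= k)%N -> `|u k - a| < e.

Definition has_gradient n (f : 'cV[R]_n -> R) (x gf : 'cV[R]_n) : Prop :=
  forall e : R, 0 < e -> exists2 d : R, 0 < d & forall z,
    enorm (z - x) < d -> `|f z - f x - dotv gf (z - x)| <= e * enorm (z - x).

Definition has_jacobian n m (c : 'cV[R]_n -> 'cV[R]_m) (x : 'cV[R]_n)
    (Jc : 'M[R]_(m, n)) : Prop :=
  forall e : R, 0 < e -> exists2 d : R, 0 < d & forall z,
    enorm (z - x) < d -> enorm (c z - c x - Jc *m (z - x)) <= e * enorm (z - x).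

Definition loc_lipschitz_vec n k (F : 'cV[R]_n -> 'cV[R]_k) : Prop :=
  forall x, exists2 r : R, 0 < r & exists L : R, forall u v,
    enorm (u - x) < r -> enorm (v - x) < r -> enorm (F u - F v) <= L * enorm (u - v).

Definition loc_lipschitz_mx n m k (F : 'cV[R]_n -> 'M[R]_(m, k)) : Prop :=
  forall x, exists2 r : R, 0 < r & exists L : R, forall u v,
    enorm (u - x) < r -> enorm (v - x) < r -> fnorm (F u - F v) <= L * enorm (u - v).

Definition has_deriv1 (h : R -> R) (t d : R) : Prop :=
  forall e : R, 0 < e -> exists2 del : R, 0 < del & forall s,
    `|s - t| < del -> `|h s - h t - d * (s - t)| <= e * `|s - t|.

Local Open Scope ereal_scope.

(* distance from a point to a set: inf of ||s - v|| over s in S (+oo if S empty) *)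
Definition dist n (v : 'cV[R]_n) (S : set 'cV[R]_n) : \bar R :=
  ereal_inf ((fun s => (enorm (s - v))%:E) @` S).

Definition reg_subdiff n (phi : 'cV[R]_n -> \bar R) (x : 'cV[R]_n) : set 'cV[R]_n :=
  [set v | phi x \is a fin_num /\
    forall e : R, (0 < e)%R -> exists2 d : R, (0 < d)%R & forall z,
      (enorm (z - x) < d)%R ->
      phi x + (dotv v (z - x) - e * enorm (z - x))%:E <= phi z].

Definition lim_subdiff n (phi : 'cV[R]_n -> \bar R) (x : 'cV[R]_n) : set 'cV[R]_n :=
  [set v | exists (xk vk : nat -> 'cV[R]_n) (pk : nat -> R) (a : R),
     phi x = a%:E /\ vcvg xk x /\ (forall k, phi (xk k) = (pk k)%:E) /\ rcvg pk a /\
     (forall k, reg_subdiff phi (xk k) (vk k)) /\ vcvg vk v].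

Definition prox n (g : 'cV[R]_n -> \bar R) (gam : R) (x : 'cV[R]_n) : set 'cV[R]_n :=
  [set w | forall u, g w + ((enorm (w - x)) ^+ 2 / (2 * gam))%:E
                      <= g u + ((enorm (u - x)) ^+ 2 / (2 * gam))%:E].

Definition prox_bdd_with n (g : 'cV[R]_n -> \bar R) (gam : R) : Prop :=
  (0 < gam)%R /\ exists M : R, forall x, M%:E <= g x + ((enorm x) ^+ 2 / (2 * gam))%:E.
Definition gamma_g n (g : 'cV[R]_n -> \bar R) : \bar R :=
  ereal_sup [set gam%:E | gam in prox_bdd_with g].

Variables (n m : nat).
Variables (f : 'cV[R]_n -> R) (gradf : 'cV[R]_n -> 'cV[R]_n)
          (g : 'cV[R]_n -> \bar R)
          (c : 'cV[R]_n -> 'cV[R]_m) (Jc : 'cV[R]_n -> 'M[R]_(m, n))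
          (b : R -> \bar R) (db : R -> R).

Definition q (x : 'cV[R]_n) : \bar R := (f x)%:E + g x.
(* q_mu = f + mu * sum_i b(c_i) + g ; equals +oo outside D since b = +oo on [0,oo) *)
Definition qmu (mu : R) (x : 'cV[R]_n) : \bar R :=
  (f x)%:E + (mu%:E * \sum_(i < m) b (c x i ord0)) + g x.
(* gradient of f_mu on D (chain rule: grad f + mu * sum_i b'(c_i) grad c_i) *)
Definition gradfmu (mu : R) (x : 'cV[R]_n) : 'cV[R]_n :=
  (gradf x + mu *: ((Jc x)^T *m \col_(i < m) db (c x i ord0)))%R.
Definition strictly_feasible (x : 'cV[R]_n) : Prop :=
  q x != +oo /\ forall i : 'I_m, (c x i ord0 < 0)%R.
Definition Tmap (mu gam : R) (z : 'cV[R]_n) : set 'cV[R]_n :=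
  prox g gam (z - gam *: gradfmu mu z)%R.

Definition fb_accept (alpha mu gam : R) (z w : 'cV[R]_n) : Prop :=
  (forall i : 'I_m, (c w i ord0 < 0)%R) /\
  qmu mu w <= qmu mu z - ((1 - alpha) / (2 * gam) * (enorm (w - z)) ^+ 2)%:E /\
  (enorm (gradfmu mu w - gradfmu mu z) <= alpha / gam * enorm (w - z))%R.

Definition fb_stop (mu gam eps : R) (z w : 'cV[R]_n) : Prop :=
  (enorm (gam^-1 *: (z - w) - gradfmu mu z + gradfmu mu w) <= eps)%R.

Definition gprev (gamma0 : R) (gam : nat -> R) (j : nat) : R :=
  if j is j'.+1 then gam j' else gamma0.

(* IPFB_returns z0 mu eps x : some (terminating) run of IP-FB(z0, mu, eps),
   with parameters gamma0, alpha, beta, returns x.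
   z j, zb j : the iterates z^j, \bar z^j; gam j : the accepted stepsize gamma_j,
   obtained from gamma_{j-1} (gamma0 for j = 0) after t j backtracking steps;
   every rejected trial stepsize produced a point failing the test. *)
Definition IPFB_returns (gamma0 alpha beta : R) (z0 : 'cV[R]_n) (mu eps : R)
    (x : 'cV[R]_n) : Prop :=
  exists (J : nat) (z zb : nat -> 'cV[R]_n) (gam : nat -> R) (t : nat -> nat),
    z 0%N = z0 /\
    (forall j, (j < J)%N -> z j.+1 = zb j) /\
    (forall j, (j <= J)%N ->
       gam j = (gprev gamma0 gam j * beta ^+ t j)%R /\
       (forall s, (s < t j)%N -> exists w,
          Tmap mu (gprev gamma0 gam j * beta ^+ s)%R (z j) w /\
          ~ fb_accept alpha mu (gprev gamma0 gam j * beta ^+ s)%R (z j) w) /\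
       Tmap mu (gam j) (z j) (zb j) /\
       fb_accept alpha mu (gam j) (z j) (zb j)) /\
    (forall j, (j < J)%N -> ~ fb_stop mu (gam j) eps (z j) (zb j)) /\
    fb_stop mu (gam J) eps (z J) (zb J) /\
    x = zb J.

Definition ip_stop (eps_p eps_d epsk : R) (x1 : 'cV[R]_n) (y1 : 'cV[R]_m) : Prop :=
  (epsk <= eps_d)%R /\ forall i : 'I_m, (Num.min (- c x1 i ord0) (y1 i ord0) <= eps_p)%R.

(* IP_run ... N : (x k, y k, mu k, eps k) are the data of the first N iterations
   k = 0..N-1 of Algorithm IP (it did not stop before iteration N-1); an infinite
   run is one for which IP_run holds for every N. *)
Definition IP_run (gamma0 alpha beta eps_p eps_d theta_eps theta_mu : R)
    (x : nat -> 'cV[R]_n) (y : nat -> 'cV[R]_m) (mu eps : nat -> R) (N : nat) : Prop :=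
  strictly_feasible (x 0%N) /\ (0 < eps 0%N)%R /\ (0 < mu 0%N)%R /\
  forall k, (k < N)%N ->
    IPFB_returns gamma0 alpha beta (x k) (mu k) (eps k) (x k.+1) /\
    (forall i : 'I_m, y k.+1 i ord0 = mu k * db (c (x k.+1) i ord0))%R /\
    ((k.+1 < N)%N ->
       ~ ip_stop eps_p eps_d (eps k) (x k.+1) (y k.+1) /\
       (0 < eps k.+1)%R /\ (eps k.+1 <= Num.max eps_d (theta_eps * eps k))%R /\
       (0 < mu k.+1)%R /\ (mu k.+1 <= theta_mu * mu k)%R).

End IP.

(* Every IP-FB step is an accepted forward-backward step, so it decreases q_mu
   (sufficient decrease with 1 - alpha >= 0); telescoping gives q_mu(x^{k+1}) <= q_mu(x^k),
   while q <= q_mu because b >= 0, and q_mu grows with mu.  Since q_mu = +oo off D, the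
   descent also keeps every iterate strictly feasible.

   The prox optimality inequality makes (z - x)/gam - grad f_mu(z) a regular subgradient
   of g at x = T(z).  Adding grad f_mu(x), resp. grad f(x), gives regular subgradients of
   q_mu, resp. q, at x; the first one is exactly the residual bounded by eps in the
   stopping test, and the second differs from it by grad f_mu(x) - grad f(x) =
   grad c(x)^T y, which is where the multiplier y = mu b'(c(x)) >= 0 comes from. *)

From HB Require Import structures.
From mathcomp Require Import all_boot all_order all_algebra.
From mathcomp Require Import all_classical all_reals all_analysis.
From mathcomp Require Import ring lra.
Set Implicit Arguments. Unset Strict Implicit.
Import Order.TTheory GRing.Theory Num.Theory.
Import numFieldNormedType.Exports.

Section Vectors.
Local Open Scope ring_scope.
Variables (R : realType) (n : nat).
Implicit Types u v w : 'cV[R]_n.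

Lemma dotv_ge0 u : 0 <= dotv u u.
Proof. by apply: sumr_ge0 => i _; rewrite -expr2 sqr_ge0. Qed.

Lemma enorm_ge0 u : 0 <= enorm u.
Proof. exact: sqrtr_ge0. Qed.

Lemma enorm_sq u : enorm u ^+ 2 = dotv u u.
Proof. by rewrite sqr_sqrtr // dotv_ge0. Qed.

Lemma enorm0 : enorm (0 : 'cV[R]_n) = 0.
Proof. by rewrite /enorm /dotv big1 ?sqrtr0 // => i _; rewrite mxE mul0r. Qed.

Lemma dotvC u v : dotv u v = dotv v u.
Proof. by apply: eq_bigr => i _; rewrite mulrC. Qed.

Lemma dotvDl u v w : dotv (u + v) w = dotv u w + dotv v w.
Proof. by rewrite /dotv -big_split; apply: eq_bigr => i _; rewrite !mxE mulrDl. Qed.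

Lemma dotvDr u v w : dotv w (u + v) = dotv w u + dotv w v.
Proof. by rewrite dotvC dotvDl !(dotvC w). Qed.

Lemma dotvZl a u v : dotv (a *: u) v = a * dotv u v.
Proof. by rewrite /dotv mulr_sumr; apply: eq_bigr => i _; rewrite !mxE mulrA. Qed.

Lemma dotvNl u v : dotv (- u) v = - dotv u v.
Proof. by rewrite -scaleN1r dotvZl mulN1r. Qed.

Lemma dotv0l u : dotv 0 u = 0.
Proof. by rewrite -(scale0r 0) dotvZl mul0r. Qed.

Lemma enorm_sqD u v :
  enorm (u + v) ^+ 2 = enorm u ^+ 2 + 2 * dotv u v + enorm v ^+ 2.
Proof. by rewrite !enorm_sq !dotvDl !dotvDr (dotvC v u); ring. Qed.

Lemma coord_le_enorm u i : `|u i ord0| <= enorm u.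
Proof.
rewrite /enorm -(sqrtr_sqr (u i ord0)) ler_sqrt ?dotv_ge0 //.
rewrite /dotv (bigD1 i) //= -expr2 lerDl.
by apply: sumr_ge0 => j _; rewrite -expr2 sqr_ge0.
Qed.

Lemma dotv_le u v : `|dotv u v| <= (\sum_(j < n) `|u j ord0|) * enorm v.
Proof.
rewrite /dotv mulr_suml; apply: le_trans (ler_norm_sum _ _ _) _.
by apply: ler_sum => j _; rewrite normrM ler_wpM2l ?coord_le_enorm.
Qed.

End Vectors.

Section Gradients.
Local Open Scope ring_scope.
Variables (R : realType) (n : nat).
Implicit Types (p q : 'cV[R]_n -> R) (x G : 'cV[R]_n).

Lemma has_gradient_ext p q x G : p =1 q -> has_gradient p x G -> has_gradient q x G.
Proof.
move=> pq H e e0; have [d d0 Hd] := H e e0; exists d => // z hz.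
by rewrite -!pq; apply: Hd.
Qed.

Lemma has_gradient_cst (a : R) x : has_gradient (fun=> a) x 0.
Proof.
move=> e e0; exists 1 => // z _; rewrite dotv0l !subrr normr0.
by rewrite mulr_ge0 ?enorm_ge0 ?ltW.
Qed.

Lemma has_gradientD p q x G1 G2 : has_gradient p x G1 -> has_gradient q x G2 ->
  has_gradient (fun z => p z + q z) x (G1 + G2).
Proof.
move=> H1 H2 e e0.
have e2 : 0 < e / 2 by rewrite divr_gt0.
have [d1 d10 Hd1] := H1 _ e2; have [d2 d20 Hd2] := H2 _ e2.
exists (Num.min d1 d2) => [|z]; first by rewrite lt_min d10 d20.
rewrite lt_min => /andP[z1 z2]; rewrite dotvDl.
have -> : p z + q z - (p x + q x) - (dotv G1 (z - x) + dotv G2 (z - x)) =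
  (p z - p x - dotv G1 (z - x)) + (q z - q x - dotv G2 (z - x)) by ring.
apply: le_trans (ler_normD _ _) _.
rewrite [e]splitr mulrDl; exact: lerD (Hd1 z z1) (Hd2 z z2).
Qed.

Lemma has_gradientZ (a : R) p x G : has_gradient p x G ->
  has_gradient (fun z => a * p z) x (a *: G).
Proof.
move=> H e e0.
have a1 : 0 < `|a| + 1 by rewrite ltr_wpDl.
have [d d0 Hd] := H (e / (`|a| + 1)) (divr_gt0 e0 a1); exists d => // z hz.
rewrite dotvZl -!mulrBr normrM.
apply: le_trans (ler_wpM2l (normr_ge0 _) (Hd z hz)) _.
rewrite mulrA ler_wpM2r ?enorm_ge0 // mulrCA ger_pMr // ler_pdivrMr //.
by rewrite mul1r lerDl.
Qed.

Lemma has_gradient_sum (I : Type) (s : seq I) (F : I -> 'cV[R]_n -> R)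
    (GF : I -> 'cV[R]_n) x :
  (forall i, has_gradient (F i) x (GF i)) ->
  has_gradient (fun z => \sum_(i <- s) F i z) x (\sum_(i <- s) GF i).
Proof.
move=> H; elim: s => [|i s IH].
  rewrite big_nil; apply: (has_gradient_ext _ (has_gradient_cst 0 x)) => z.
  by rewrite big_nil.
rewrite big_cons; apply: (has_gradient_ext _ (has_gradientD (H i) IH)) => z.
by rewrite big_cons.
Qed.

Lemma has_gradient_local_lipschitz p x G : has_gradient p x G ->
  exists2 d, 0 < d & forall z, enorm (z - x) < d ->
    `|p z - p x| <= (\sum_(j < n) `|G j ord0| + 1) * enorm (z - x).
Proof.
move=> H; have [d d0 Hd] := H 1 ltr01; exists d => // z hz.
have -> : p z - p x = (p z - p x - dotv G (z - x)) + dotv G (z - x) by ring.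
apply: le_trans (ler_normD _ _) _; rewrite mulrDl mul1r addrC.
by apply: lerD; [exact: dotv_le | have := Hd z hz; rewrite mul1r].
Qed.

Lemma has_gradient_comp (h : R -> R) (dh : R) p x G :
  has_deriv1 h (p x) dh -> has_gradient p x G ->
  has_gradient (fun z => h (p z)) x (dh *: G).
Proof.
move=> Hh Hp e e0.
have [d1 d10 Hd1] := has_gradient_local_lipschitz Hp.
set L := \sum_(j < n) `|G j ord0| + 1 in Hd1.
have L0 : 0 < L by rewrite ltr_wpDl // sumr_ge0.
have dh1 : 0 < `|dh| + 1 by rewrite ltr_wpDl.
have [del del0 Hdel] := Hh (e / 2 / L) (divr_gt0 (divr_gt0 e0 (ltr0n _ 2)) L0).
have [d2 d20 Hd2] := Hp (e / 2 / (`|dh| + 1)) (divr_gt0 (divr_gt0 e0 (ltr0n _ 2)) dh1).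
exists (Num.min (Num.min d1 d2) (del / L)) => [|z].
  by rewrite !lt_min d10 d20 divr_gt0.
rewrite !lt_min => /andP[/andP[z1 z2] z3].
set N := enorm (z - x).
have N0 : 0 <= N by apply: enorm_ge0.
have Lp : `|p z - p x| <= L * N by apply: Hd1.
have Ldel : `|p z - p x| < del by apply: le_lt_trans Lp _; rewrite mulrC -ltr_pdivlMr.
have -> : h (p z) - h (p x) - dotv (dh *: G) (z - x) =
   (h (p z) - h (p x) - dh * (p z - p x)) + dh * (p z - p x - dotv G (z - x)).
  by rewrite dotvZl; ring.
apply: le_trans (ler_normD _ _) _.
have -> : e * N = e / 2 / L * (L * N) + (`|dh| + 1) * (e / 2 / (`|dh| + 1) * N).
  by field; rewrite !gt_eqF.
apply: lerD.
  by apply: le_trans (Hdel _ Ldel) (ler_wpM2l _ Lp); rewrite !divr_ge0 ?ltW.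
rewrite normrM; apply: le_trans (ler_wpM2l (normr_ge0 dh) (Hd2 z z2)) _.
by rewrite ler_wpM2r ?lerDl // mulr_ge0 // !divr_ge0 // ltW.
Qed.

Lemma has_gradient_coord m (c : 'cV[R]_n -> 'cV[R]_m) x J (i : 'I_m) :
  has_jacobian c x J -> has_gradient (fun z => c z i ord0) x (row i J)^T.
Proof.
move=> H e e0; have [d d0 Hd] := H e e0; exists d => // z hz.
have -> : dotv (row i J)^T (z - x) = (J *m (z - x)) i ord0.
  by rewrite /dotv !mxE; apply: eq_bigr => j _; rewrite !mxE.
apply: le_trans (Hd z hz).
by have := coord_le_enorm (c z - c x - J *m (z - x)) i; rewrite !mxE.
Qed.

End Gradients.

Lemma trmx_mul_col (R : comPzRingType) m n (J : 'M[R]_(m, n)) (w : 'I_m -> R) :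
  (J^T *m \col_i w i = \sum_(i < m) w i *: (row i J)^T)%R.
Proof.
apply/matrixP => j k; rewrite !mxE summxE; apply: eq_bigr => i _.
by rewrite !mxE mulrC.
Qed.

Section Subdifferentials.
Local Open Scope ring_scope.
Variables (R : realType) (n : nat).
Implicit Types (phi psi g : 'cV[R]_n -> \bar R) (p : 'cV[R]_n -> R) (u x v G : 'cV[R]_n).

Lemma dist_le_enorm v s (S : set 'cV[R]_n) : S s -> (dist v S <= (enorm (s - v))%:E)%E.
Proof. by move=> Ss; apply: ereal_inf_lbound; exists s. Qed.

Lemma reg_subdiff_lim_subdiff phi x v : reg_subdiff phi x v -> lim_subdiff phi x v.
Proof.
move=> Hv; have [phix_fin _] := Hv.
have cst_cvg u : vcvg (fun=> u) u.
  by move=> e e0; exists 0%N => k _; rewrite subrr enorm0.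
exists (fun=> x), (fun=> v), (fun=> fine (phi x)), (fine (phi x)).
split; first by rewrite fineK.
split; first exact: cst_cvg.
split; first by move=> k; rewrite fineK.
split; first by move=> e e0; exists 0%N => k _; rewrite subrr normr0.
by split; last exact: cst_cvg.
Qed.

Lemma reg_subdiff_minorant phi psi x v :
  (forall z, psi z <= phi z)%E -> phi x = psi x ->
  reg_subdiff psi x v -> reg_subdiff phi x v.
Proof.
move=> psi_le phix [psix_fin H]; split; first by rewrite phix.
move=> e e0; have [d d0 Hd] := H e e0; exists d => // z hz.
by rewrite phix; apply: le_trans (Hd z hz) (psi_le z).
Qed.

Lemma reg_subdiffDl p phi x G v : has_gradient p x G -> reg_subdiff phi x v ->
  reg_subdiff (fun z => (p z)%:E + phi z)%E x (v + G).
Proof.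
move=> Hp [phix_fin Hphi]; split; first by rewrite fin_numD phix_fin.
move=> e e0; have e2 : 0 < e / 2 by rewrite divr_gt0.
have [d1 d10 Hd1] := Hp _ e2; have [d2 d20 Hd2] := Hphi _ e2.
exists (Num.min d1 d2) => [|z]; first by rewrite lt_min d10 d20.
rewrite lt_min => /andP[z1 z2].
have := Hd2 z z2; have := Hd1 z z1.
rewrite -(fineK phix_fin); set a := fine (phi x) => Hpz Hphiz.
apply: le_trans (leeD2l (p z)%:E Hphiz); rewrite -!EFinD lee_fin dotvDl.
move: Hpz; rewrite ler_norml => /andP[Hpz _]; lra.
Qed.

Lemma prox_quadratic_minorant g (gam : R) u x z : 0 < gam ->
  g x \is a fin_num -> prox g gam u x ->
  (g x + (dotv (gam^-1 *: (u - x)) (z - x) - enorm (z - x) ^+ 2 / (2 * gam))%:E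
     <= g z)%E.
Proof.
move=> gam0 gx_fin Hprox.
have Ezu : enorm (z - u) ^+ 2 / (2 * gam) = enorm (z - x) ^+ 2 / (2 * gam)
    + gam^-1 * dotv (z - x) (x - u) + enorm (x - u) ^+ 2 / (2 * gam).
  have -> : z - u = (z - x) + (x - u) by rewrite addrA subrK.
  by rewrite (enorm_sqD (z - x)); field; rewrite gt_eqF.
have -> : dotv (gam^-1 *: (u - x)) (z - x) = - (gam^-1 * dotv (z - x) (x - u)).
  by rewrite -opprB scalerN dotvNl dotvZl dotvC.
have := Hprox z; rewrite -(fineK gx_fin) Ezu.
case: (g z) => [gz| |] /=; rewrite ?leey //.
rewrite -!EFinD !lee_fin; lra.
Qed.

Lemma prox_reg_subdiff g (gam : R) u x : 0 < gam ->
  g x \is a fin_num -> prox g gam u x -> reg_subdiff g x (gam^-1 *: (u - x)).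
Proof.
move=> gam0 gx_fin Hprox; split => // e e0.
exists (gam * e) => [|z hz]; first by rewrite mulr_gt0.
apply: le_trans (prox_quadratic_minorant z gam0 gx_fin Hprox).
apply: leeD2l; rewrite lee_fin lerD2l lerN2 ler_pdivrMr ?mulr_gt0 // expr2.
have N0 := enorm_ge0 (z - x).
apply: le_trans (ler_wpM2r N0 (ltW hz)) _; nra.
Qed.

End Subdifferentials.

Section InteriorPoint.
Local Open Scope ring_scope.
Variables (R : realType) (n m : nat).
Variables (f : 'cV[R]_n -> R) (gradf : 'cV[R]_n -> 'cV[R]_n) (g : 'cV[R]_n -> \bar R)
  (c : 'cV[R]_n -> 'cV[R]_m) (Jc : 'cV[R]_n -> 'M[R]_(m, n))
  (b : R -> \bar R) (db : R -> R).
Hypothesis Hg_ninf : forall x, g x != -oo%E.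
Hypothesis Hb_ge0 : forall t, (0 <= b t)%E.
Hypothesis Hb_dom : forall t, b t != +oo%E <-> t < 0.
Implicit Types (mu : R) (z : 'cV[R]_n).

Lemma barrier_fin t : t < 0 -> b t = (fine (b t))%:E.
Proof.
move=> t0; rewrite fineK // fin_numE (Hb_dom t).2 // andbT.
by rewrite gt_eqF // (lt_le_trans _ (Hb_ge0 t)) ?ltNye.
Qed.

Lemma barrier_pinfty t : 0 <= t -> b t = +oo%E.
Proof. by rewrite leNgt => /negP t0; apply/eqP; apply: contra_notT t0 => /Hb_dom. Qed.

Lemma sum_barrier_ge0 z : (0 <= \sum_(i < m) b (c z i ord0))%E.
Proof. exact: sume_ge0. Qed.

(* On [D] this is the paper's f_mu; off [D] the infinite barrier values become
   [fine +oo = 0], so it is junk there. *)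
Definition fmu mu z : R := f z + mu * \sum_(i < m) fine (b (c z i ord0)).

Lemma qmuE mu z : (forall i, c z i ord0 < 0) ->
  qmu f g c b mu z = ((fmu mu z)%:E + g z)%E.
Proof.
move=> cz; rewrite /qmu /fmu (eq_bigr (fun i => (fine (b (c z i ord0)))%:E)).
  by rewrite sumEFin -EFinM -EFinD.
by move=> i _; apply: barrier_fin.
Qed.

Lemma qmu_infeasible mu z : 0 < mu -> ~ (forall i, c z i ord0 < 0) ->
  qmu f g c b mu z = +oo%E.
Proof.
move=> mu0 /existsNP[i /negP]; rewrite -leNgt => ci; rewrite /qmu.
rewrite (bigD1 i) //= barrier_pinfty // addye; last first.
  by rewrite gt_eqF // (lt_le_trans _ (sume_ge0 _ _)) ?ltNye.
by rewrite mulry gtr0_sg // mul1e addey // addye.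
Qed.

Lemma fmu_le_qmu mu z : 0 < mu -> ((fmu mu z)%:E + g z <= qmu f g c b mu z)%E.
Proof.
move=> mu0; have [cz|cz] := pselect (forall i, c z i ord0 < 0).
  by rewrite qmuE.
by rewrite qmu_infeasible ?leey.
Qed.

Lemma q_le_qmu mu z : 0 <= mu -> (q f g z <= qmu f g c b mu z)%E.
Proof.
move=> mu0; apply: leeD2r; apply: leeDl.
by apply: mule_ge0; [rewrite lee_fin | exact: sum_barrier_ge0].
Qed.

Lemma le_qmu mu1 mu2 z : 0 <= mu1 -> mu1 <= mu2 ->
  (qmu f g c b mu1 z <= qmu f g c b mu2 z)%E.
Proof.
move=> mu10 mu12; apply: leeD2r; apply: leeD2l.
by apply: lee_wpmul2r; [exact: sum_barrier_ge0 | rewrite lee_fin].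
Qed.

Lemma q_fin_num_g z : q f g z != +oo%E -> g z \is a fin_num.
Proof.
by rewrite /q adde_Neq_pinfty // => /andP[_ gz]; rewrite fin_numE Hg_ninf.
Qed.

Lemma strictly_feasible_qmu mu z : strictly_feasible f g c z ->
  qmu f g c b mu z != +oo%E.
Proof.
by case=> qz cz; rewrite qmuE // adde_Neq_pinfty //; have /andP[] := q_fin_num_g qz.
Qed.

Hypothesis Hf : forall x, has_gradient f x (gradf x).
Hypothesis Hc : forall x, has_jacobian c x (Jc x).
Hypothesis Hb_d1 : forall t, t < 0 -> has_deriv1 (fine \o b) t (db t).

Lemma fmu_gradient mu x : (forall i, c x i ord0 < 0) ->
  has_gradient (fmu mu) x (gradfmu gradf c Jc db mu x).
Proof.
move=> cx; rewrite /gradfmu trmx_mul_col.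
apply: has_gradientD (Hf x) (has_gradientZ _ _).
apply: (@has_gradient_sum _ _ _ _ (fun i z => fine (b (c z i ord0)))) => i.
exact: has_gradient_comp (Hb_d1 (cx i)) (has_gradient_coord i (Hc x)).
Qed.

Lemma gradfmu_multiplier mu x (y : 'cV[R]_m) :
  (forall i, y i ord0 = mu * db (c x i ord0)) ->
  gradfmu gradf c Jc db mu x = gradf x + (Jc x)^T *m y.
Proof.
move=> Hy; rewrite /gradfmu scalemxAr; congr (_ + _ *m _).
by apply/matrixP => i j; rewrite (ord1 j) !mxE Hy.
Qed.

Section ForwardBackwardStep.
Variables (mu gam : R) (z x : 'cV[R]_n).
Hypotheses (gam_gt0 : 0 < gam) (gx_fin : g x \is a fin_num)
  (HT : Tmap gradf g c Jc db mu gam z x).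

Lemma Tmap_reg_subdiff_g :
  reg_subdiff g x (gam^-1 *: (z - x) - gradfmu gradf c Jc db mu z).
Proof.
have := prox_reg_subdiff gam_gt0 gx_fin HT.
by rewrite addrAC scalerDr scalerN scalerA mulVf ?gt_eqF // scale1r.
Qed.

Lemma Tmap_reg_subdiff_q :
  reg_subdiff (q f g) x
    (gam^-1 *: (z - x) - gradfmu gradf c Jc db mu z + gradf x).
Proof. exact: reg_subdiffDl (Hf x) Tmap_reg_subdiff_g. Qed.

Lemma Tmap_reg_subdiff_qmu : 0 < mu -> (forall i, c x i ord0 < 0) ->
  reg_subdiff (qmu f g c b mu) x
    (gam^-1 *: (z - x) - gradfmu gradf c Jc db mu z + gradfmu gradf c Jc db mu x).
Proof.
move=> mu0 cx; apply: reg_subdiff_minorant (fun w => fmu_le_qmu w mu0) (qmuE mu cx) _.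
exact: reg_subdiffDl (fmu_gradient _ cx) Tmap_reg_subdiff_g.
Qed.

End ForwardBackwardStep.

Section InnerSolver.
Variables (gamma0 alpha beta : R).
Hypotheses (gamma0_gt0 : 0 < gamma0) (beta_gt0 : 0 < beta).

Lemma backtracked_stepsize_gt0 (gam : nat -> R) (t : nat -> nat) J :
  (forall j, (j <= J)%N -> gam j = gprev gamma0 gam j * beta ^+ t j) ->
  forall j, (j <= J)%N -> 0 < gam j.
Proof.
move=> gamE; elim=> [|j IH] hj; rewrite gamE // mulr_gt0 ?exprn_gt0 //.
exact: IH (ltnW hj).
Qed.

Lemma IPFB_last_step z0 mu eps x1 :
  IPFB_returns f gradf g c Jc b db gamma0 alpha beta z0 mu eps x1 ->
  (forall i, c x1 i ord0 < 0) /\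
  exists z gam, [/\ 0 < gam, Tmap gradf g c Jc db mu gam z x1
                 & fb_stop gradf c Jc db mu gam eps z x1].
Proof.
move=> [J [z [zb [gam [t [_ [_ [Hj [_ [Hstop ->]]]]]]]]]].
have [_ [_ [HT [cJ _]]]] := Hj J (leqnn J).
split=> //; exists (z J), (gam J); split=> //.
exact: backtracked_stepsize_gt0 (fun j hj => (Hj j hj).1) _ (leqnn J).
Qed.

Lemma IPFB_descent z0 mu eps x1 : alpha <= 1 ->
  IPFB_returns f gradf g c Jc b db gamma0 alpha beta z0 mu eps x1 ->
  (qmu f g c b mu x1 <= qmu f g c b mu z0)%E.
Proof.
move=> alpha_le1 [J [z [zb [gam [t [z0E [zS [Hj [_ [_ ->]]]]]]]]]].
have gam_gt0 := backtracked_stepsize_gt0 (fun j hj => (Hj j hj).1).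
have decrease j : (j <= J)%N -> (qmu f g c b mu (zb j) <= qmu f g c b mu (z j))%E.
  move=> hj; have [_ [_ [_ [_ [dec _]]]]] := Hj j hj.
  apply: le_trans dec _; rewrite leeBlDr // leeDl // lee_fin.
  rewrite mulr_ge0 ?exprn_ge0 ?enorm_ge0 // divr_ge0 ?subr_ge0 //.
  by rewrite mulr_ge0 // ltW // gam_gt0.
have telescope j : (j <= J)%N -> (qmu f g c b mu (z j) <= qmu f g c b mu z0)%E.
  elim: j => [|j IH] hj; first by rewrite z0E.
  by rewrite zS //; apply: le_trans (decrease j (ltnW hj)) (IH (ltnW hj)).
exact: le_trans (decrease J (leqnn J)) (telescope J (leqnn J)).
Qed.

Section Run.
Variables (eps_p eps_d theta_eps theta_mu : R) (x : nat -> 'cV[R]_n)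
  (y : nat -> 'cV[R]_m) (mu eps : nat -> R) (N : nat).
Hypothesis Hrun : IP_run f gradf g c Jc b db gamma0 alpha beta eps_p eps_d
  theta_eps theta_mu x y mu eps N.

Lemma IP_run_mu_gt0 k : (k < N)%N -> 0 < mu k.
Proof.
have [_ [_ [mu0 Hit]]] := Hrun.
by case: k => [|k] // hk; have [_ [_ /(_ hk) [_ [_ [_ []]]]]] := Hit k (ltnW hk).
Qed.

Lemma IP_run_mu_le k : theta_mu <= 1 -> (k.+1 < N)%N -> mu k.+1 <= mu k.
Proof.
move=> theta_le1 hk; have [_ [_ [_ Hit]]] := Hrun.
have [_ [_ /(_ hk) [_ [_ [_ [_ mu_le]]]]]] := Hit k (ltnW hk).
by apply: le_trans mu_le _; rewrite ler_piMl // ltW // IP_run_mu_gt0 // ltnW.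
Qed.

Lemma IP_run_strictly_feasible k : alpha <= 1 -> (k <= N)%N ->
  strictly_feasible f g c (x k).
Proof.
move=> alpha_le1; have [feas0 [_ [_ Hit]]] := Hrun.
elim: k => [|k IH] hk //; have [Hfb _] := Hit k hk.
split; last by have [] := IPFB_last_step Hfb.
rewrite -ltey; apply: le_lt_trans (q_le_qmu _ (ltW (IP_run_mu_gt0 hk))) _.
apply: le_lt_trans (IPFB_descent alpha_le1 Hfb) _.
by rewrite ltey; apply: strictly_feasible_qmu; exact: IH (ltnW hk).
Qed.

End Run.
End InnerSolver.
End InteriorPoint.

Unset Implicit Arguments. Set Strict Implicit.
Local Open Scope ring_scope.
Local Open Scope classical_set_scope.
Local Open Scope ereal_scope.

Theorem lemma4p1 (R : realType) (n m : nat)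
  (f : 'cV[R]_n -> R) (gradf : 'cV[R]_n -> 'cV[R]_n)
  (g : 'cV[R]_n -> \bar R)
  (c : 'cV[R]_n -> 'cV[R]_m) (Jc : 'cV[R]_n -> 'M[R]_(m, n))
  (b : R -> \bar R) (db d2b : R -> R)
  (* f has a locally Lipschitz gradient *)
  (Hf : forall x, has_gradient f x (gradf x))
  (Hgradf : loc_lipschitz_vec gradf)
  (* g proper, lsc, prox-bounded, continuous relative to dom g *)
  (Hg_ninf : forall x, g x != -oo)
  (Hg_proper : exists x, g x != +oo)
  (Hg_lsc : lower_semicontinuous g)
  (Hg_pb : exists gam : R, prox_bdd_with g gam)
  (Hg_cont : forall (xk : nat -> 'cV[R]_n) (x : 'cV[R]_n),
      (forall k, g (xk k) != +oo) -> vcvg xk x -> (g \o xk) @ \oo --> g x)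
  (* c has a locally Lipschitz Jacobian *)
  (Hc : forall x, has_jacobian c x (Jc x))
  (HJc : loc_lipschitz_mx Jc)
  (* q bounded below on the feasible set; F nonempty *)
  (Hinf : ereal_inf [set q f g x | x in [set x | forall i : 'I_m, (c x i ord0 <= 0)%R]]
            \is a fin_num)
  (HF : exists x, strictly_feasible f g c x)
  (* barrier: dom b = (-oo,0), b >= 0, C^2 there with b' > 0, b -> oo at 0^- *)
  (Hb_ge0 : forall t, 0 <= b t)
  (Hb_dom : forall t, b t != +oo <-> (t < 0)%R)
  (Hb_d1 : forall t : R, (t < 0)%R -> has_deriv1 (fine \o b) t (db t))
  (Hb_d2 : forall t : R, (t < 0)%R -> has_deriv1 db t (d2b t))
  (Hb_d2cont : forall t : R, (t < 0)%R -> {for t, continuous d2b})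
  (Hb_pos : forall t : R, (t < 0)%R -> (0 < db t)%R)
  (Hb_blow : forall M : R, exists2 d : R, (0 < d)%R &
      forall t : R, (- d < t)%R -> (t < 0)%R -> M%:E < b t)
  (* parameters *)
  (gamma0 alpha beta eps_p eps_d theta_eps theta_mu : R)
  (Hgamma0 : (0 < gamma0)%R) (Hgamma0g : gamma0%:E < gamma_g g)
  (Halpha : (0 < alpha < 1)%R) (Hbeta : (0 < beta < 1)%R)
  (Heps_p : (0 < eps_p)%R) (Heps_d : (0 < eps_d)%R)
  (Htheta_eps : (0 < theta_eps < 1)%R) (Htheta_mu : (0 < theta_mu < 1)%R)
  (* a run of Algorithm IP with N iterations *)
  (x : nat -> 'cV[R]_n) (y : nat -> 'cV[R]_m) (mu eps : nat -> R) (N : nat)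
  (Hrun : IP_run f gradf g c Jc b db gamma0 alpha beta eps_p eps_d theta_eps theta_mu
            x y mu eps N) :
  forall k, (k < N)%N ->
    (* (1) *)
    (q f g (x k.+1) <= qmu f g c b (mu k) (x k.+1) /\
     qmu f g c b (mu k) (x k.+1) <= qmu f g c b (mu k) (x k) /\
     ((0 < k)%N -> qmu f g c b (mu k) (x k) <= qmu f g c b (mu k.-1) (x k))) /\
    (* (2) *)
    (dist 0 (reg_subdiff (qmu f g c b (mu k)) (x k.+1)) <= (eps k)%:E /\
     strictly_feasible f g c (x k.+1)) /\
    (* (3) *)
    (forall i : 'I_m, (0 <= y k.+1 i ord0)%R) /\
    (* (4) *)
    dist (- ((Jc (x k.+1))^T *m y k.+1))%R (lim_subdiff (q f g) (x k.+1)) <= (eps k)%:E.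
Proof.
have [_ alpha_lt1] := andP Halpha; have [beta_gt0 _] := andP Hbeta.
have [_ theta_mu_lt1] := andP Htheta_mu.
have alpha_le1 := ltW alpha_lt1; have theta_mu_le1 := ltW theta_mu_lt1.
move=> k hk; have [Hfb [Hy _]] := Hrun.2.2.2 k hk.
have mu_gt0 := IP_run_mu_gt0 Hrun hk.
have feas :=
  IP_run_strictly_feasible Hg_ninf Hb_ge0 Hb_dom Hgamma0 beta_gt0 Hrun alpha_le1 hk.
have [cx1 [z [gam [gam_gt0 HT Hstop]]]] := IPFB_last_step Hgamma0 beta_gt0 Hfb.
have gx1_fin := q_fin_num_g Hg_ninf feas.1.
split; [|split; [|split]].
- split; first exact: q_le_qmu Hb_ge0 _ _ (ltW mu_gt0).
  split; first by apply: IPFB_descent Hfb.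
  case: k hk mu_gt0 {Hfb Hy feas cx1 HT Hstop gx1_fin} => // k hk mu_gt0 _ /=.
  by apply: le_qmu => //; [exact: ltW | exact (IP_run_mu_le Hrun theta_mu_le1 hk)].
- split=> //.
  have Hreg := Tmap_reg_subdiff_qmu Hg_ninf Hb_ge0 Hb_dom Hf Hc Hb_d1
    gam_gt0 gx1_fin HT mu_gt0 cx1.
  by apply: le_trans (dist_le_enorm _ Hreg) _; rewrite subr0 lee_fin.
- by move=> i; rewrite Hy mulr_ge0 ?ltW ?Hb_pos.
- have Hlim := reg_subdiff_lim_subdiff (Tmap_reg_subdiff_q Hf gam_gt0 gx1_fin HT).
  apply: le_trans (dist_le_enorm _ Hlim) _.
  by rewrite lee_fin opprK -addrA -(gradfmu_multiplier gradf (c := c) Jc (db := db) Hy).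
Qed.
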